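(* Let $r \geq 2$ and let $1 \leq t \leq k_1 \leq k_2 \leq \cdots \leq k_r$ be integers. There exists $n_0(k_{r-1},k_r,t)$, depending only on $k_{r-1}, k_r, t$, such that the following holds for all integers $n \geq n_0(k_{r-1},k_r,t)$ (with $k_r \leq n$). Let $\mathcal{F}_1, \mathcal{F}_2, \dots, \mathcal{F}_r$ be families of subsets of $[n]=\{1,\dots,n\}$ such that every member of $\mathcal{F}_i$ has size at most $k_i$, for each $i$. Suppose that for all $i, j \in \{1,\dots,r\}$, every $A \in \mathcal{F}_i$ and $B \in \mathcal{F}_j$ with $|A \cap B| < t$ satisfy $|A \triangle B| \leq \min\{k_i,k_j\} - t$. Then $$\prod_{i=1}^r |\mathcal{F}_i| \leq \prod_{i=1}^r \left( \sum_{j=0}^{k_i - t} \binom{n-t}{k_i - t - j} \right).$$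
   Context: $A \triangle B$ denotes the symmetric difference $(A\setminus B)\cup(B\setminus A)$. *)

From mathcomp Require Import all_boot.
Set Implicit Arguments. Unset Strict Implicit. Unset Printing Implicit Defensive.

Definition symdiff (T : finType) (A B : {set T}) : {set T} :=
  (A :\: B) :|: (B :\: A).

From mathcomp Require Import all_boot zify.
Set Implicit Arguments. Unset Strict Implicit. Unset Printing Implicit Defensive.

(* Taking i = j in the hypothesis shows that each F_i alone satisfies it with
   k = k_i, so it suffices to bound a single such family F by
   \sum_(j <= k - t) 'C(n - t, j).  If some t-set S lies in every member of F,
   this is the number of sets of size at most k containing S.  Otherwise F has
   only O(n^(k-t-1)) members, which is below 'C(n - t, k - t) for large n:
   members of a fixed size s < k lie within k - t - 1 elements of any one of
   them, and a member of size k meets every member in at least t points, so it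
   contains a t-subset S of a fixed member together with a point of a member
   avoiding S, which fixes t + 1 of its elements. *)

Lemma card_bigcup_leq (I T : finType) (P : pred I) (F : I -> {set T}) :
  #|\bigcup_(i | P i) F i| <= \sum_(i | P i) #|F i|.
Proof.
elim/big_rec2: _ => [|i U n _ IH]; first by rewrite cards0.
by rewrite cardsU; apply: leq_trans (leq_subr _ _) (leq_add _ IH).
Qed.

Lemma ffact_leq_exp n m : n ^_ m <= n ^ m.
Proof.
rewrite ffact_prod -[in n ^ m](card_ord m) -prod_nat_const.
by apply: leq_prod => i _; apply: leq_subr.
Qed.

Lemma bin_leq_exp n m : 'C(n, m) <= n ^ m.
Proof.
by apply: leq_trans (ffact_leq_exp n m); rewrite -bin_ffact leq_pmulr ?fact_gt0.
Qed.

Lemma exp_leq_ffact n m : (n.+1 - m) ^ m <= n ^_ m.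
Proof.
rewrite ffact_prod -{2}(card_ord m) -prod_nat_const.
by apply: leq_prod => i _; have := ltn_ord i; lia.
Qed.

Lemma card_symdiff (T : finType) (A B : {set T}) :
  #|symdiff A B| = #|A :\: B| + #|B :\: A|.
Proof.
rewrite /symdiff cardsU.
have -> : (A :\: B) :&: (B :\: A) = set0.
  by apply/setP => x; rewrite !inE; case: (x \in A); case: (x \in B).
by rewrite cards0 subn0.
Qed.

(* A member is determined by its trace on A0 and by its part outside A0, which
   has at most d elements. *)
Lemma card_uniform_near (T : finType) (G : {set {set T}}) (A0 : {set T}) s d :
  0 < #|T| ->
  (forall B, B \in G -> #|B| = s) ->
  (forall B, B \in G -> s - #|B :&: A0| <= d) ->
  #|G| <= 2 ^ #|A0| * #|T| ^ d.
Proof.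
move=> T_gt0 size_G near_G.
have cover : G \subset \bigcup_(S in powerset A0) [set B in G | B :&: A0 == S].
  apply/subsetP => B BG; apply/bigcupP; exists (B :&: A0).
    by rewrite powersetE subsetIr.
  by rewrite inE BG eqxx.
apply: leq_trans (subset_leq_card cover) _.
apply: leq_trans (card_bigcup_leq _ _) _.
rewrite -card_powerset -sum_nat_const; apply: leq_sum => S _.
set GS := [set B in G | B :&: A0 == S].
case: (set_0Vmem GS) => [->|[B0]]; first by rewrite cards0.
rewrite inE => /andP[/near_G B0_near /eqP B0S].
have outside_inj : {in GS &, injective (fun B => B :\: A0)}.
  move=> B1 B2; rewrite !inE => /andP[_ /eqP e1] /andP[_ /eqP e2] eD.
  by rewrite -(setID B1 A0) -(setID B2 A0) e1 e2 eD.
rewrite -(card_in_imset outside_inj).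
apply: (@leq_trans #|[set D : {set T} | #|D| == s - #|S|]|).
  apply: subset_leq_card; apply/subsetP => _ /imsetP[B + ->].
  by rewrite !inE => /andP[/size_G sB /eqP BS]; rewrite cardsD BS sB.
rewrite card_draws; apply: leq_trans (bin_leq_exp _ _) _.
by apply: leq_pexp2l; rewrite // -B0S.
Qed.

Lemma card_supsets_leq (T : finType) (F : {set {set T}}) (S : {set T}) k :
  (forall C, C \in F -> S \subset C) -> (forall C, C \in F -> #|C| <= k) ->
  #|F| <= \sum_(j < (k - #|S|).+1) 'C(#|T| - #|S|, j).
Proof.
move=> S_sub size_F.
have outside_inj : {in F &, injective (fun C => C :\: S)}.
  move=> C1 C2 /S_sub s1 /S_sub s2 eD.
  by rewrite -(setID C1 S) -(setID C2 S) (setIidPr s1) (setIidPr s2) eD.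
rewrite -(card_in_imset outside_inj).
have cover : [set C :\: S | C in F] \subset
    \bigcup_(j < (k - #|S|).+1) [set D : {set T} | D \subset ~: S & #|D| == j].
  apply/subsetP => _ /imsetP[C CF ->].
  have small : #|C :\: S| < (k - #|S|).+1.
    by rewrite ltnS cardsDS ?S_sub // leq_sub2r ?size_F.
  apply/bigcupP; exists (Ordinal small) => //.
  by rewrite inE /= eqxx andbT setDE subsetIr.
apply: leq_trans (subset_leq_card cover) _.
apply: leq_trans (card_bigcup_leq _ _) _.
by apply: leq_sum => j _; rewrite cards_draws cardsCs setCK.
Qed.

Lemma bin_geq_mul_exp c N t m :
  0 < m -> 2 * (t + m) <= N -> c * (m`! * 2 ^ m) <= N ->
  c * N ^ m.-1 <= 'C(N - t, m).
Proof.
move=> m_gt0 tmN cN.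
have half_N : N ^ m <= 2 ^ m * (N.+1 - (t + m)) ^ m.
  by rewrite -expnMn leq_exp2r //; lia.
have ffact_N : (N.+1 - (t + m)) ^ m <= 'C(N - t, m) * m`!.
  by rewrite bin_ffact (_ : N.+1 - _ = (N - t).+1 - m) ?exp_leq_ffact //; lia.
rewrite -(leq_pmul2r (_ : 0 < m`! * 2 ^ m)) ?muln_gt0 ?fact_gt0 ?expn_gt0 //.
apply: (@leq_trans (N ^ m)).
  have -> : N ^ m = N * N ^ m.-1 by rewrite -expnS prednK.
  by rewrite mulnAC leq_mul2r cN orbT.
apply: leq_trans half_N _.
by rewrite mulnA (mulnC _ (2 ^ m)) leq_mul2l ffact_N orbT.
Qed.

(* Without a t-set common to all members, each of the k.+1 size layers has at
   most 2 ^ k * (k * 2 ^ k.+1) * n ^ (k - t).-1 members (card_layer_lt,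
   card_top_layer). *)
Definition nonstar_const k := k.+1 * (2 ^ k * (k * 2 ^ k.+1)).

Definition threshold K := 2 * K + nonstar_const K * (K`! * 2 ^ K).

Lemma leq_nonstar_const k K : k <= K -> nonstar_const k <= nonstar_const K.
Proof. by move=> kK; rewrite /nonstar_const !leq_mul ?leq_pexp2l. Qed.

Section SingleFamily.

Variables (T : finType) (F : {set {set T}}) (t k : nat).
Hypothesis t_le_k : t <= k.
Hypothesis size_F : forall A, A \in F -> #|A| <= k.
Hypothesis symdiff_F : forall A B, A \in F -> B \in F ->
  #|A :&: B| < t -> #|symdiff A B| <= k - t.

Lemma card_le1_of_subn_eq0 : k - t = 0 -> #|F| <= 1.
Proof.
move=> kt; apply/card_le1_eqP => A B AF BF.
have [small|large] := ltnP #|A :&: B| t.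
  have := symdiff_F AF BF small.
  rewrite kt leqn0 cards_eq0 /symdiff setU_eq0 !setD_eq0.
  by move=> /andP[AB BA]; apply/eqP; rewrite eqEsubset AB BA.
have [sA sB] := (size_F AF, size_F BF).
have AB : A \subset B by apply/setIidPl/eqP; rewrite eqEcard subsetIl /=; lia.
have BA : B \subset A by apply/setIidPl/eqP; rewrite eqEcard subsetIl setIC /=; lia.
by apply/eqP; rewrite eqEsubset AB BA.
Qed.

Lemma top_member_meet B C : B \in F -> #|B| = k -> C \in F -> t <= #|B :&: C|.
Proof.
move=> BF Bk CF; rewrite leqNgt; apply/negP => small.
have := symdiff_F BF CF small; rewrite card_symdiff cardsD Bk.
have := subset_leq_card (subsetIl B C); rewrite Bk; lia.
Qed.

Lemma card_layer_lt s : 0 < #|T| -> s < k ->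
  #|[set B in F | #|B| == s]| <= 2 ^ k * #|T| ^ (k - t).-1.
Proof.
move=> T_gt0 s_lt_k.
case: (set_0Vmem [set B in F | #|B| == s]) => [->|[A0]]; first by rewrite cards0.
rewrite inE => /andP[A0F /eqP A0s].
apply: leq_trans (card_uniform_near (A0:=A0) (s:=s) (d:=(k - t).-1) T_gt0 _ _) _.
- by move=> B; rewrite inE => /andP[_ /eqP].
- move=> B; rewrite inE => /andP[BF /eqP Bs].
  have [small|] := ltnP #|B :&: A0| t; last by lia.
  have := symdiff_F BF A0F small.
  by rewrite card_symdiff !cardsD Bs A0s [A0 :&: B]setIC; lia.
- by rewrite A0s leq_mul2r leq_pexp2l ?orbT // ltnW.
Qed.

(* A member B of size k containing S meets C in at least t points, not all of
   them in S, so B contains x |: S for some x in C :\: S. *)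
Lemma card_top_layer_through (S C : {set T}) : 0 < #|T| -> #|S| = t ->
  C \in F -> ~~ (S \subset C) ->
  #|[set B in F | #|B| == k & S \subset B]| <= k * (2 ^ k.+1 * #|T| ^ (k - t).-1).
Proof.
move=> T_gt0 St CF SnC.
have cover : [set B in F | #|B| == k & S \subset B] \subset
    \bigcup_(x in C :\: S) [set B in F | #|B| == k & x |: S \subset B].
  apply/subsetP => B; rewrite !inE => /and3P[BF /eqP Bk SB].
  have [BC_S|/subsetPn [x xBC xS]] := boolP (B :&: C \subset S).
    exfalso; have := top_member_meet BF Bk CF.
    have : #|B :&: C| <= #|S :&: C|.
      by apply: subset_leq_card; rewrite subsetI BC_S subsetIr.
    have : #|S :&: C| < #|S|.
      apply: proper_card; rewrite properEneq subsetIl andbT.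
      by apply: contraNneq SnC => /setIidPl.
    lia.
  move: xBC; rewrite inE => /andP[xB xC].
  apply/bigcupP; exists x; first by rewrite inE xS xC.
  by rewrite !inE BF Bk eqxx subUset sub1set xB SB.
apply: leq_trans (subset_leq_card cover) _.
apply: leq_trans (card_bigcup_leq _ _) _.
apply: (@leq_trans (\sum_(x in C :\: S) 2 ^ k.+1 * #|T| ^ (k - t).-1)).
  apply: leq_sum => x; rewrite inE => /andP[xS _].
  have xS_card : #|x |: S| = t.+1 by rewrite cardsU1 xS St.
  apply: leq_trans (card_uniform_near (A0 := x |: S) (s := k) (d := (k - t).-1)
                      T_gt0 _ _) _.
  - by move=> B; rewrite !inE => /and3P[_ /eqP].
  - move=> B; rewrite !inE => /and3P[_ _ xSB].
    by rewrite (setIidPr xSB) xS_card; lia.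
  - by rewrite xS_card leq_mul2r leq_pexp2l ?orbT.
rewrite sum_nat_const leq_mul2r; apply/orP; right.
exact: leq_trans (subset_leq_card (subsetDl C S)) (size_F CF).
Qed.

Lemma card_top_layer : 0 < #|T| ->
  (forall S : {set T}, #|S| = t -> exists2 C, C \in F & ~~ (S \subset C)) ->
  #|[set B in F | #|B| == k]| <= 2 ^ k * (k * (2 ^ k.+1 * #|T| ^ (k - t).-1)).
Proof.
move=> T_gt0 nonstar.
case: (set_0Vmem [set B in F | #|B| == k]) => [->|[A0]]; first by rewrite cards0.
rewrite inE => /andP[A0F /eqP A0k].
set Ss := [set S : {set T} | S \subset A0 & #|S| == t].
have cover : [set B in F | #|B| == k] \subset
    \bigcup_(S in Ss) [set B in F | #|B| == k & S \subset B].
  apply/subsetP => B; rewrite inE => /andP[BF /eqP Bk].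
  have /card_gt0P [S] : 0 < #|[set S : {set T} | S \subset B :&: A0 & #|S| == t]|.
    by rewrite cards_draws bin_gt0 top_member_meet.
  rewrite inE subsetI => /andP[/andP[SB SA] St].
  apply/bigcupP; exists S; first by rewrite inE SA St.
  by rewrite !inE BF Bk eqxx SB.
apply: leq_trans (subset_leq_card cover) _.
apply: leq_trans (card_bigcup_leq _ _) _.
apply: (@leq_trans (\sum_(S in Ss) k * (2 ^ k.+1 * #|T| ^ (k - t).-1))).
  apply: leq_sum => S; rewrite inE => /andP[_ /eqP St].
  have [C CF SnC] := nonstar S St.
  exact: card_top_layer_through CF SnC.
rewrite sum_nat_const leq_mul2r; apply/orP; right.
rewrite -A0k -card_powerset; apply: subset_leq_card.
by apply/subsetP => S; rewrite inE powersetE => /andP[].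
Qed.

Lemma card_nonstar : 0 < t -> 0 < #|T| ->
  (forall S : {set T}, #|S| = t -> exists2 C, C \in F & ~~ (S \subset C)) ->
  #|F| <= nonstar_const k * #|T| ^ (k - t).-1.
Proof.
move=> t_gt0 T_gt0 nonstar.
have cover : F \subset \bigcup_(s < k.+1) [set B in F | #|B| == s].
  apply/subsetP => B BF; have small : #|B| < k.+1 by rewrite ltnS size_F.
  by apply/bigcupP; exists (Ordinal small); rewrite // inE BF eqxx.
apply: leq_trans (subset_leq_card cover) _.
apply: leq_trans (card_bigcup_leq _ _) _.
apply: (@leq_trans (\sum_(s < k.+1) 2 ^ k * (k * (2 ^ k.+1 * #|T| ^ (k - t).-1)))).
  apply: leq_sum => s _.
  case: (ltngtP s k) => [s_lt_k | | ->]; last exact: card_top_layer.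
    apply: leq_trans (card_layer_lt T_gt0 s_lt_k) _.
    rewrite leq_mul2l mulnA; apply/orP; right.
    by apply: leq_pmull; rewrite muln_gt0 expn_gt0 andbT; lia.
  by rewrite ltnNge -ltnS ltn_ord.
by rewrite sum_nat_const card_ord /nonstar_const !mulnA.
Qed.

Lemma card_family_leq K : 0 < t -> k <= K -> threshold K <= #|T| ->
  #|F| <= \sum_(j < (k - t).+1) 'C(#|T| - t, j).
Proof.
move=> t_gt0 kK TK.
have [m0|m_gt0] := posnP (k - t).
  by rewrite m0 big_ord1 bin0 card_le1_of_subn_eq0.
have [/existsP[S /andP[/eqP St /forall_inP S_common]] | no_star] :=
  boolP [exists S : {set T}, (#|S| == t) && [forall C in F, S \subset C]].
  by have := card_supsets_leq S_common size_F; rewrite St.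
have nonstar : forall S : {set T}, #|S| = t -> exists2 C, C \in F & ~~ (S \subset C).
  move=> S St; move/existsPn: no_star => /(_ S); rewrite St eqxx /=.
  by move=> /forall_inPn[C CF SnC]; exists C.
have T_gt0 : 0 < #|T| by move: TK; rewrite /threshold; lia.
apply: leq_trans (card_nonstar t_gt0 T_gt0 nonstar) _.
apply: leq_trans (bin_geq_mul_exp (t := t) m_gt0 _ _) _.
- by move: TK; rewrite /threshold; lia.
- apply: leq_trans TK; apply: leq_trans (leq_addl (2 * K) _).
  apply: leq_mul; first exact: leq_nonstar_const.
  by apply: leq_mul; [apply: leq_fact | apply: leq_pexp2l]; lia.
- by rewrite big_ord_recr /= leq_addl.
Qed.

End SingleFamily.

Lemma sum_bin_rev N m :
  \sum_(0 <= j < m.+1) 'C(N, m - j) = \sum_(j < m.+1) 'C(N, j).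
Proof.
rewrite big_nat_rev -(big_mkord xpredT); apply: eq_big_nat => j /andP[_ j_lt].
by congr 'C(_, _); lia.
Qed.

Theorem theorem1p4 :
  forall t K1 K2 : nat,
  exists n0 : nat,
  forall (r : nat) (k : nat -> nat),
    2 <= r ->
    (forall i, 1 <= i < r -> k i <= k i.+1) ->
    1 <= t <= k 1 ->
    k r.-1 = K1 -> k r = K2 ->
  forall n : nat, n0 <= n -> k r <= n ->
  forall F : nat -> {set {set 'I_n}},
    (forall i, 1 <= i <= r -> forall A, A \in F i -> #|A| <= k i) ->
    (forall i j, 1 <= i <= r -> 1 <= j <= r ->
       forall A B, A \in F i -> B \in F j ->
         #|A :&: B| < t -> #|symdiff A B| <= minn (k i) (k j) - t) ->
    \prod_(1 <= i < r.+1) #|F i|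
      <= \prod_(1 <= i < r.+1)
           \sum_(0 <= j < (k i - t).+1) 'C(n - t, k i - t - j).
Proof.
move=> t K1 K2; exists (threshold K2).
move=> r k r_ge2 k_step /andP[t_gt0 t_le_k1] _ kr n n_ge _ F size_F symdiff_F.
pose D := [pred i | 0 < i <= r].
have k_mono : {in D &, {homo k : i j / i <= j}}.
  apply: homo_leq_in => [//|y x z|i j|i]; first exact: leq_trans.
    by rewrite !inE => Di Dj l ilj; rewrite inE; lia.
  by rewrite !inE => /andP[i_gt0 _] /andP[_ ir]; apply: k_step; lia.
rewrite big_nat_cond [in X in _ <= X]big_nat_cond.
apply: leq_prod => i /andP[/andP[i_gt0 i_le_r] _].
have ir : 0 < i <= r by rewrite i_gt0 -ltnS.
have [D1 Di Dr] : [/\ 1 \in D, i \in D & r \in D] by split; rewrite inE; lia.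
have t_le_ki : t <= k i := leq_trans t_le_k1 (k_mono _ _ D1 Di i_gt0).
have ki_le_K2 : k i <= K2 by rewrite -kr; apply: k_mono; rewrite // -ltnS.
have symdiff_Fi A B : A \in F i -> B \in F i ->
    #|A :&: B| < t -> #|symdiff A B| <= k i - t.
  by rewrite -[k i]minnn; apply: symdiff_F.
have := card_family_leq t_le_ki (size_F _ ir) symdiff_Fi t_gt0 ki_le_K2.
by rewrite card_ord sum_bin_rev; apply.
Qed.
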